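(* Let $\mathcal{V}$ be a proper variety of groups (for example, the variety of abelian groups), and let $F:{\sf Gr}\to{\sf Gr}$ be a functor on the category of groups together with a natural transformation $\varepsilon:F\to\mathrm{Id}_{\sf Gr}$, such that $F(G)\in\mathcal{V}$ for every group $G$. Then $\varepsilon$ is trivial, i.e. $\varepsilon_G:F(G)\to G$ is the trivial homomorphism for every group $G$.
   Context: A variety of groups is the class of all groups satisfying a fixed system of identities (equivalently, a full subcategory closed under small products, homomorphic images and subgroups); it is proper if it is not the class of all groups. *)

Set Implicit Arguments.

Record Group := {
  carrier :> Type;
  gmul : carrier -> carrier -> carrier;
  ginv : carrier -> carrier;
  gone : carrier;
  gmul_assoc : forall x y z, gmul x (gmul y z) = gmul (gmul x y) z;
  gmul_1l : forall x, gmul gone x = x;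
  gmul_1r : forall x, gmul x gone = x;
  gmul_Vl : forall x, gmul (ginv x) x = gone;
  gmul_Vr : forall x, gmul x (ginv x) = gone
}.

Record Hom (G H : Group) := {
  hfun :> G -> H;
  hfun_mul : forall x y, hfun (gmul G x y) = gmul H (hfun x) (hfun y)
}.

Definition id_hom (G : Group) : Hom G G :=
  {| hfun := fun x => x; hfun_mul := fun x y => eq_refl |}.

Definition comp_hom (G H K : Group) (g : Hom H K) (f : Hom G H) : Hom G K.
Proof.
  refine {| hfun := fun x => g (f x) |}.
  intros x y; rewrite (hfun_mul f), (hfun_mul g); reflexivity.
Defined.

Inductive word :=
| wvar : nat -> word
| wone : word
| wmul : word -> word -> word
| winv : word -> word.

Fixpoint weval (G : Group) (v : nat -> G) (w : word) : G :=
  match w with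
  | wvar n => v n
  | wone => gone G
  | wmul a b => gmul G (weval G v a) (weval G v b)
  | winv a => ginv G (weval G v a)
  end.

Definition satisfies (G : Group) (w : word) : Prop :=
  forall v : nat -> G, weval G v w = gone G.

(* A variety is given by a system of laws (identities w = 1). *)
Definition variety := word -> Prop.

Definition in_variety (V : variety) (G : Group) : Prop :=
  forall w, V w -> satisfies G w.

Definition proper_variety (V : variety) : Prop :=
  exists G : Group, ~ in_variety V G.

(* Endofunctor of Gr (morphism equality is pointwise, i.e. equality of
   underlying maps). *)
Record Functor := {
  fobj :> Group -> Group;
  fmap : forall G H : Group, Hom G H -> Hom (fobj G) (fobj H);
  fmap_id : forall G (x : fobj G), fmap (id_hom G) x = x;
  fmap_comp : forall G H K (g : Hom H K) (f : Hom G H) (x : fobj G),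
      fmap (comp_hom g f) x = fmap g (fmap f x)
}.

Record NatToId (F : Functor) := {
  eps :> forall G : Group, Hom (F G) G;
  eps_natural : forall G H (f : Hom G H) (x : F G),
      eps H (fmap F f x) = f (eps G x)
}.

(* If eps_G(x) = g <> 1 for some group G, embed G into the unrestricted
   wreath product K = W wr G of an arbitrary group W.  The image of eps_K is
   a normal subgroup containing the image of g, hence it contains every
   commutator [b, g] with b in the base W^G; evaluating such commutators at
   the identity of G produces every element of W.  Laws of V hold in F(K),
   hence on the elements of the image of eps_K, hence in the base group on
   the chosen commutators, and finally in W.  So every group lies in V. *)

From Stdlib Require Import Classical ClassicalEpsilon FunctionalExtensionality.

Declare Scope group_scope.
Local Open Scope group_scope.
Local Infix "*" := (gmul _) : group_scope.
Local Notation "x ^-1" := (ginv _ x) (at level 3, left associativity) : group_scope.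
Local Notation "1" := (gone _) : group_scope.

Section GroupFacts.
Variable G : Group.

Lemma gmul_idem_eq1 (a : G) : a * a = a -> a = 1.
Proof.
  intros Haa.
  rewrite <- (gmul_1l G a), <- (gmul_Vl G a), <- gmul_assoc, Haa.
  reflexivity.
Qed.

Lemma ginv_unique (a b : G) : a * b = 1 -> b = a^-1.
Proof.
  intros Hab.
  rewrite <- (gmul_1l G b), <- (gmul_Vl G a), <- gmul_assoc, Hab, gmul_1r.
  reflexivity.
Qed.

Lemma ginv1 : (1 : G)^-1 = 1.
Proof. symmetry; apply ginv_unique, gmul_1l. Qed.

End GroupFacts.

Lemma hom1 (G H : Group) (f : Hom G H) : f 1 = 1.
Proof. apply gmul_idem_eq1; rewrite <- hfun_mul, gmul_1l; reflexivity. Qed.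

Lemma homV (G H : Group) (f : Hom G H) (x : G) : f x^-1 = (f x)^-1.
Proof. apply ginv_unique; rewrite <- hfun_mul, gmul_Vr; apply hom1. Qed.

Lemma hom_weval (G H : Group) (f : Hom G H) (v : nat -> G) (w : word) :
  f (weval G v w) = weval H (fun i => f (v i)) w.
Proof.
  induction w as [n | | w1 IH1 w2 IH2 | w1 IH1]; simpl.
  - reflexivity.
  - apply hom1.
  - rewrite hfun_mul, IH1, IH2; reflexivity.
  - rewrite homV, IH1; reflexivity.
Qed.

Lemma weval_hom_satisfies {G H : Group} (f : Hom G H) (w : word) (v : nat -> G) :
  satisfies G w -> weval H (fun i => f (v i)) w = 1.
Proof. intros Hw; rewrite <- hom_weval, Hw; apply hom1. Qed.

Lemma weval_eq1_inj {G H : Group} (f : Hom G H) (w : word) (v : nat -> G) :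
  (forall x y, f x = f y -> x = y) ->
  weval H (fun i => f (v i)) w = 1 -> weval G v w = 1.
Proof. intros f_inj Hw; apply f_inj; rewrite hom_weval, hom1; exact Hw. Qed.

Definition gcomm {G : Group} (x y : G) : G := x * y * x^-1 * y^-1.

Definition conj_hom {G : Group} (k : G) : Hom G G.
Proof.
  refine {| hfun := fun x : G => k * x * k^-1 |}.
  intros x y.
  rewrite <- !(gmul_assoc G); do 2 f_equal.
  rewrite !(gmul_assoc G), (gmul_Vl G), (gmul_1l G); reflexivity.
Defined.

Section EpsImage.
Variables (F : Functor) (e : NatToId F).

(* The image of [e K] is normal in [K] by naturality with respect to
   conjugations, hence closed under commutators with elements of [K]. *)
Definition eps_comm_preimage {K : Group} (k : K) (y : F K) : F K :=
  fmap F (conj_hom k) y * y^-1.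

Lemma eps_comm_preimageE {K : Group} (k : K) (y : F K) :
  e K (eps_comm_preimage k y) = gcomm k (e K y).
Proof.
  unfold eps_comm_preimage.
  rewrite hfun_mul, homV, eps_natural; reflexivity.
Qed.

End EpsImage.

Definition fun_group (X : Type) (W : Group) : Group.
Proof.
  refine {| carrier := X -> W;
            gmul := fun a b x => a x * b x;
            ginv := fun a x => (a x)^-1;
            gone := fun _ => 1 |};
    intros; apply functional_extensionality; intros.
  - apply gmul_assoc.
  - apply gmul_1l.
  - apply gmul_1r.
  - apply gmul_Vl.
  - apply gmul_Vr.
Defined.

Definition eval_hom (X : Type) (W : Group) (x : X) : Hom (fun_group X W) W :=
  {| hfun := fun a : fun_group X W => a x; hfun_mul := fun a b => eq_refl |}.

Section Wreath.
Variables G W : Group.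

Let B := fun_group G W.

Lemma wreath_ext (p q : B * G) :
  (forall h, fst p h = fst q h) -> snd p = snd q -> p = q.
Proof.
  destruct p as [a g], q as [b h]; simpl; intros Hab Hgh.
  rewrite (functional_extensionality a b Hab), Hgh; reflexivity.
Qed.

(* Unrestricted wreath product: [G] acts on the base [W^G] by right
   translation, [(a, g) * (b, h) = (x |-> a x * b (x * g), g * h)]. *)
Definition wreath : Group.
Proof.
  refine {| carrier := (B * G)%type;
            gmul := fun p q =>
              (fun x => fst p x * fst q (x * snd p), snd p * snd q);
            ginv := fun p => (fun x => (fst p (x * (snd p)^-1))^-1, (snd p)^-1);
            gone := (fun _ => 1, 1) |};
    intros; apply wreath_ext; simpl; intros.
  - rewrite !gmul_assoc; reflexivity.
  - apply gmul_assoc.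
  - rewrite gmul_1l, gmul_1r; reflexivity.
  - apply gmul_1l.
  - rewrite gmul_1r; reflexivity.
  - apply gmul_1r.
  - apply gmul_Vl.
  - apply gmul_Vl.
  - rewrite <- (gmul_assoc G), (gmul_Vr G), (gmul_1r G), (gmul_Vr W).
    reflexivity.
  - apply gmul_Vr.
Defined.

Definition wreath_top : Hom G wreath.
Proof.
  refine {| hfun := fun g : G => ((fun _ => 1), g) : wreath |}.
  intros g h; apply wreath_ext; simpl; intros.
  - rewrite gmul_1l; reflexivity.
  - reflexivity.
Defined.

Definition wreath_base : Hom B wreath.
Proof.
  refine {| hfun := fun b : B => (b, 1) : wreath |}.
  intros a b; apply wreath_ext; simpl; intros.
  - rewrite gmul_1r; reflexivity.
  - rewrite gmul_1l; reflexivity.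
Defined.

Lemma wreath_base_inj (a b : B) : wreath_base a = wreath_base b -> a = b.
Proof. intros Hab; exact (f_equal fst Hab). Qed.

Lemma gcomm_wreath_base_top (b : B) (g : G) :
  gcomm (wreath_base b) (wreath_top g)
  = wreath_base (fun x => b x * (b (x * g))^-1).
Proof.
  apply wreath_ext; simpl; intros.
  - rewrite !ginv1, !gmul_1r, gmul_1l; reflexivity.
  - rewrite gmul_1l, ginv1, !gmul_1r; apply gmul_Vr.
Qed.

Definition delta (a : W) : B :=
  fun x => if excluded_middle_informative (x = 1) then a else 1.

Lemma delta1 (a : W) : delta a 1 = a.
Proof.
  unfold delta; destruct (excluded_middle_informative _) as [_ | n1];
    [reflexivity | now elim n1].
Qed.

Lemma delta_neq1 (a : W) (x : G) : x <> 1 -> delta a x = 1.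
Proof.
  intros x_neq1; unfold delta.
  destruct (excluded_middle_informative _); [contradiction | reflexivity].
Qed.

End Wreath.

Lemma satisfies_of_eps_neq1 {F : Functor} (e : NatToId F) (G W : Group)
  (x : F G) (w : word) :
  e G x <> 1 -> satisfies (F (wreath G W)) w -> satisfies W w.
Proof.
  intros ex_neq1 FKw v.
  set (g := e G x) in *.
  set (y := fmap F (wreath_top G W) x).
  set (b := fun i (h : G) => delta G W (v i) h * (delta G W (v i) (h * g))^-1).
  set (z := fun i => eps_comm_preimage F (wreath_base G W (delta G W (v i))) y).
  assert (ez : forall i, e _ (z i) = wreath_base G W (b i)).
  { intros i; unfold z, y.
    rewrite eps_comm_preimageE, eps_natural; apply gcomm_wreath_base_top. }
  assert (b1 : forall i, b i 1 = v i).
  { intros i; unfold b.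
    rewrite gmul_1l, delta1, delta_neq1, ginv1 by exact ex_neq1.
    apply gmul_1r. }
  assert (bw : weval (fun_group G W) b w = 1).
  { apply (weval_eq1_inj (wreath_base G W)); [apply wreath_base_inj |].
    rewrite <- (functional_extensionality _ _ ez).
    apply weval_hom_satisfies, FKw. }
  replace v with (fun i => eval_hom G W 1 (b i))
    by (apply functional_extensionality; exact b1).
  rewrite <- hom_weval, bw; reflexivity.
Qed.

Theorem corollary3p11 (V : variety) (HV : proper_variety V)
  (F : Functor) (e : NatToId F)
  (HF : forall G : Group, in_variety V (F G)) :
  forall (G : Group) (x : F G), e G x = gone G.
Proof.
  intros G x.
  destruct HV as [W W_notin_V].
  apply NNPP; intros ex_neq1; apply W_notin_V.
  intros w Vw.
  apply (satisfies_of_eps_neq1 e G W x w ex_neq1), HF, Vw.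
Qed.
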